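(* The elements $\alpha^{g,h}_{\chi,\psi}$, for $\chi\in X_N$ (with $\psi=\theta\chi^{-1}$) and $g,h$ relatively prime divisors of $N$, generate $H^\theta$ as an $\mathcal{O}$-module.
   Context: $p$ is an odd prime, $M$ a positive integer with $p\nmid M\varphi(M)$, $N=M$ or $Mp$, $N>1$, $\Delta=(\mathbb{Z}/N\mathbb{Z})^\times/\langle-1\rangle$. $H$ is a space of level $N$ modular symbols: a $\mathbb{Z}_p[\Delta]$-module spanned by symbols $[u:v]$ ($u,v\in\mathbb{Z}/N\mathbb{Z}$ generating the unit ideal) satisfying $[u:v]=[-u:-v]=-[-v:u]$, $[u:v]=[u:u+v]+[u+v:v]$, $\langle a\rangle[u:v]=[au:av]$. $\theta:\Delta\to\mathbb{C}_p^\times$ is a character, $\mathcal{O}=\mathbb{Z}_p[\mu_{\varphi(N)}]$, $X_N=\mathrm{Hom}((\mathbb{Z}/N\mathbb{Z})^\times,\mathcal{O}^\times)$, $e_\theta=\frac1{\varphi(N)}\sum_a\theta^{-1}(a)\langle a\rangle$, $H^\theta=e_\theta(H\otimes_{\mathbb{Z}_p}\mathcal{O})$, and $\alpha^{g,h}_{\chi,\psi}=\frac{1}{\varphi(N)^2}\sum_{a,b\in(\mathbb{Z}/N\mathbb{Z})^\times}\chi^{-1}(a)\psi^{-1}(b)[ga:hb]$. *)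

From HB Require Import structures.
From mathcomp Require Import all_boot all_order all_algebra all_fingroup.
Set Implicit Arguments. Unset Strict Implicit. Unset Printing Implicit Defensive.
Import Order.TTheory GRing.Theory Num.Theory.
Local Open Scope ring_scope.

Definition unimod (N : nat) (u v : 'Z_N) : Prop :=
  exists x y : 'Z_N, x * u + y * v = 1.

(* a homomorphism (Z/NZ)^x -> O^x  (values are automatically units) *)
Definition is_char (N : nat) (O : comUnitRingType) (chi : {unit 'Z_N} -> O)
  : Prop :=
  chi 1%g = 1 /\ forall a b : {unit 'Z_N}, chi (a * b)%g = chi a * chi b.

Definition in_span (O : comUnitRingType) (V : lmodType O) (P : V -> Prop)
  (x : V) : Prop :=
  exists s : seq (O * V), (forall q, q \in s -> P q.2) /\
                          x = \sum_(q <- s) q.1 *: q.2.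

Definition alpha (N : nat) (O : comUnitRingType) (V : lmodType O)
  (sym : 'Z_N -> 'Z_N -> V) (g h : nat) (chi psi : {unit 'Z_N} -> O) : V :=
  ((totient N)%:R ^- 2) *:
    \sum_(a : {unit 'Z_N}) \sum_(b : {unit 'Z_N})
       ((chi a)^-1 * (psi b)^-1) *: sym (g%:R * val a) (h%:R * val b).

Definition etheta (N : nat) (O : comUnitRingType) (V : lmodType O)
  (act : {unit 'Z_N} -> V -> V) (theta : {unit 'Z_N} -> O) (x : V) : V :=
  ((totient N)%:R ^-1) *: \sum_(a : {unit 'Z_N}) (theta a)^-1 *: act a x.

From HB Require Import structures.
From mathcomp Require Import all_boot all_order all_algebra all_fingroup.
From mathcomp Require Import all_solvable all_field all_character.
From mathcomp Require Import ring.
Set Implicit Arguments. Unset Strict Implicit. Unset Printing Implicit Defensive.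
Import Order.TTheory GRing.Theory Num.Theory.
Local Open Scope ring_scope.

(* The projector e_theta is O-linear and fixes each alpha^{g,h}_{chi,psi} with
   psi = theta chi^-1, since <c> multiplies it by chi(c) psi(c) = theta(c); so
   the alphas span a submodule of H^theta.  Conversely H^theta is spanned by
   the e_theta [u:v].  Write u = g a, v = h b with g = gcd(u,N), h = gcd(v,N)
   (coprime, as (u,v) is unimodular) and a, b units.  Because O contains a
   primitive phi(N)-th root of unity, the characters of (Z/NZ)^x with values
   in O satisfy the column orthogonality relation, and it expands
   e_theta [ga:hb] as sum_chi theta(b) chi(a) chi(b)^-1 alpha^{g,h}_{chi,psi}. *)

Section LinearByAxiom.
Variables (R : pzRingType) (U V : lmodType R) (f : U -> V).
Hypothesis f_lin : forall c x y, f (c *: x + y) = c *: f x + f y.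

Lemma lin_axiom0 : f 0 = 0.
Proof.
have f00 := f_lin 1 0 0; rewrite !scale1r addr0 in f00.
by apply: (addrI (f 0)); rewrite addr0 -f00.
Qed.

Lemma lin_axiomZ c x : f (c *: x) = c *: f x.
Proof. by rewrite -[c *: x]addr0 f_lin lin_axiom0 addr0. Qed.

Lemma lin_axiom_sum (I : Type) (r : seq I) (Q : pred I) (F : I -> U) :
  f (\sum_(i <- r | Q i) F i) = \sum_(i <- r | Q i) f (F i).
Proof.
apply: big_morph; last exact: lin_axiom0.
by move=> x y; rewrite -[x]scale1r f_lin !scale1r.
Qed.

Lemma lin_axiom_comb (s : seq (R * U)) :
  f (\sum_(q <- s) q.1 *: q.2) = \sum_(q <- s) q.1 *: f q.2.
Proof. by rewrite lin_axiom_sum; apply: eq_bigr => q _; rewrite lin_axiomZ. Qed.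

End LinearByAxiom.

Section SpanClosure.
Variables (R : comUnitRingType) (V : lmodType R) (P : V -> Prop).

Lemma in_span0 : in_span P 0.
Proof. by exists [::]; rewrite big_nil. Qed.

Lemma in_span_gen x : P x -> in_span P x.
Proof.
move=> Px; exists [:: (1, x)]; split; last by rewrite big_seq1 scale1r.
by move=> q; rewrite inE => /eqP ->.
Qed.

Lemma in_spanZD c x y : in_span P x -> in_span P y -> in_span P (c *: x + y).
Proof.
move=> [s [sP ->]] [t [tP ->]].
exists ([seq (c * q.1, q.2) | q <- s] ++ t); split.
  by move=> q; rewrite mem_cat => /orP[/mapP[q' /sP ? ->] | /tP].
rewrite big_cat big_map scaler_sumr; congr (_ + _).
by apply: eq_bigr => q _; rewrite scalerA.
Qed.

Lemma in_span_sum (I : eqType) (r : seq I) (k : I -> R) (F : I -> V) :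
  (forall i, i \in r -> in_span P (F i)) -> in_span P (\sum_(i <- r) k i *: F i).
Proof.
elim: r => [|i r IHr] rF; first by rewrite big_nil; apply: in_span0.
rewrite big_cons; apply: in_spanZD; first by apply: rF; rewrite mem_head.
by apply: IHr => j rj; apply: rF; rewrite inE rj orbT.
Qed.

End SpanClosure.

Section TwistedSums.
Variables (gT : finGroupType) (R : comUnitRingType) (V : lmodType R).

Definition group_hom (chi : gT -> R) :=
  chi 1%g = 1 /\ forall x y, chi (x * y)%g = chi x * chi y.

Lemma group_hom_mulV chi x : group_hom chi -> chi x * chi x^-1%g = 1.
Proof. by case=> chi1 chiM; rewrite -chiM mulgV chi1. Qed.

Lemma group_hom_unit chi x : group_hom chi -> chi x \is a GRing.unit.
Proof.
by move=> chi_hom; apply/unitrPr; exists (chi x^-1%g); apply: group_hom_mulV.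
Qed.

Lemma group_hom_inv chi x : group_hom chi -> (chi x)^-1 = chi x^-1%g.
Proof.
move=> chi_hom; apply: (mulrI (group_hom_unit x chi_hom)).
by rewrite divrr ?group_hom_unit ?group_hom_mulV.
Qed.

Lemma group_hom_divr theta chi : group_hom theta -> group_hom chi ->
  group_hom (fun x => theta x * (chi x)^-1).
Proof.
move=> theta_hom chi_hom; have [theta1 thetaM] := theta_hom.
have [chi1 chiM] := chi_hom.
split=> [|x y]; first by rewrite theta1 chi1 invr1 mulr1.
by rewrite !group_hom_inv // invMg thetaM chiM; ring.
Qed.

(* [alpha sym g h chi psi] is [phi(N)^-2] times the twisted sum of
   [fun a b => sym (g * a) (h * b)]. *)
Definition twisted_sum (chi psi : gT -> R) (F : gT -> gT -> V) : V :=
  \sum_a \sum_b ((chi a)^-1 * (psi b)^-1) *: F a b.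

Lemma eq_twisted_sum chi psi (F G : gT -> gT -> V) :
  (forall a b, F a b = G a b) -> twisted_sum chi psi F = twisted_sum chi psi G.
Proof.
by move=> FG; apply: eq_bigr => a _; apply: eq_bigr => b _; rewrite FG.
Qed.

Lemma twisted_sum_translate chi psi F c : group_hom chi -> group_hom psi ->
  twisted_sum chi psi (fun a b => F (c * a)%g (c * b)%g) =
  (chi c * psi c) *: twisted_sum chi psi F.
Proof.
move=> chi_hom psi_hom; have [_ chiM] := chi_hom; have [_ psiM] := psi_hom.
rewrite /twisted_sum scaler_sumr (reindex_inj (mulgI c^-1%g)); apply: eq_bigr => a _.
rewrite scaler_sumr (reindex_inj (mulgI c^-1%g)); apply: eq_bigr => b _.
rewrite !mulKVg scalerA !group_hom_inv //= !invMg !invgK !chiM !psiM.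
by congr (_ *: _); ring.
Qed.

Lemma sum_if_mulgV_eq1 (x : gT) (G : gT -> V) (C : R) :
  \sum_a (if (x * a^-1)%g == 1%g then C else 0) *: G a = C *: G x.
Proof.
rewrite (bigD1 x) //= mulgV eqxx big1 ?addr0 // => a a_neq_x.
by rewrite -eq_mulgV1 eq_sym (negbTE a_neq_x) scale0r.
Qed.

Lemma twisted_sum_expansion (I : finType) (chi : I -> gT -> R) theta F a0 b0 :
  (forall i, group_hom (chi i)) -> group_hom theta ->
  (forall y, \sum_i chi i y = if y == 1%g then #|gT|%:R else 0) ->
  \sum_i (theta b0 * chi i a0 * chi i b0^-1%g) *:
      twisted_sum (chi i) (fun b => theta b * (chi i b)^-1) F =
  #|gT|%:R *: \sum_c theta c^-1%g *: F (a0 * c)%g (b0 * c)%g.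
Proof.
move=> chi_hom theta_hom chi_orth; have [_ thetaM] := theta_hom.
(* By orthogonality only the terms with a = a0 b0^-1 b survive; then put
   b = b0 c. *)
have coefE a b : \sum_i (theta b0 * chi i a0 * chi i b0^-1%g) *
      ((chi i a)^-1 * (theta b * (chi i b)^-1)^-1) =
    theta (b0 * b^-1)%g *
      (if (a0 * b0^-1 * b * a^-1)%g == 1%g then #|gT|%:R else 0).
  rewrite -chi_orth mulr_sumr; apply: eq_bigr => i _.
  have [_ chiM] := chi_hom i.
  rewrite (group_hom_inv b (group_hom_divr theta_hom (chi_hom i))) /=.
  by rewrite !group_hom_inv // invgK !chiM thetaM; ring.
transitivity (\sum_a \sum_b theta (b0 * b^-1)%g *:
    ((if (a0 * b0^-1 * b * a^-1)%g == 1%g then #|gT|%:R else 0) *: F a b)).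
  under eq_bigr do rewrite /twisted_sum scaler_sumr.
  rewrite exchange_big; apply: eq_bigr => a _.
  under eq_bigr do rewrite scaler_sumr.
  rewrite exchange_big; apply: eq_bigr => b _.
  under eq_bigr do rewrite scalerA.
  by rewrite -scaler_suml coefE scalerA.
rewrite exchange_big; under eq_bigr do rewrite -scaler_sumr sum_if_mulgV_eq1 scalerA.
rewrite scaler_sumr (reindex_inj (mulgI b0)); apply: eq_bigr => c _.
rewrite scalerA mulrC invMg !thetaM [theta b0 * _]mulrCA.
by rewrite (group_hom_mulV b0 theta_hom) mulr1 -mulgA mulKg.
Qed.

Lemma lin_axiom_twisted_sum (f : V -> V) chi psi F :
  (forall c x y, f (c *: x + y) = c *: f x + f y) ->
  f (twisted_sum chi psi F) = twisted_sum chi psi (fun a b => f (F a b)).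
Proof.
move=> f_lin; rewrite /twisted_sum lin_axiom_sum //; apply: eq_bigr => a _.
by rewrite lin_axiom_sum //; apply: eq_bigr => b _; rewrite lin_axiomZ.
Qed.

End TwistedSums.

Lemma prim_root_expr_transfer (R S : nzRingType) n (w : R) (z : S) i j :
  n.-primitive_root w -> n.-primitive_root z ->
  (w ^+ i == w ^+ j) = (z ^+ i == z ^+ j).
Proof.
by move=> w_prim z_prim; rewrite (eq_prim_root_expr w_prim) (eq_prim_root_expr z_prim).
Qed.

Lemma sumr_twist_eq0 (R : idomainType) (I : finType) (f : I -> R)
    (m : I -> I) (c : R) :
  injective m -> c != 1 -> (forall i, f (m i) = c * f i) -> \sum_i f i = 0.
Proof.
move=> m_inj c_neq1 fm.
have /eqP : \sum_i f i = c * \sum_i f i.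
  by rewrite {1}(reindex_inj m_inj) mulr_sumr; apply: eq_bigr => i _.
rewrite -subr_eq0 -{1}[\sum_i f i]mul1r -mulrBl mulf_eq0 subr_eq0 eq_sym.
by rewrite (negbTE c_neq1) => /eqP.
Qed.

Section CharactersWithValuesInDomain.
Variables (gT : finGroupType) (O : idomainType) (z : O).
Hypotheses (abelT : abelian [set: gT]) (z_prim : #|gT|.-primitive_root z).

Let G := [set: gT]%G.

Let n_gt0 : (0 < #|gT|)%N.
Proof. by rewrite -cardsT cardG_gt0. Qed.

Let w := sval (C_prim_root_exists n_gt0).
Let w_prim : #|gT|.-primitive_root w := svalP (C_prim_root_exists n_gt0).

Let lin i : 'chi[G]_i \is a linear_char.
Proof. exact/char_abelianP. Qed.

Let chi_expn i x : 'chi[G]_i x ^+ #|gT| = 1.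
Proof. by rewrite -lin_charX ?inE // -cardsT expg_cardG ?inE // lin_char1. Qed.

Let exponent i x : 'I_#|gT| := sval (prim_rootP w_prim (chi_expn i x)).

Let chiE i x : 'chi[G]_i x = w ^+ exponent i x.
Proof. by rewrite /exponent; case: prim_rootP. Qed.

(* The complex linear characters take their values among the powers of [w];
   moving the exponents from [w] to [z] keeps every multiplicative relation,
   both being primitive roots of the same order. *)
Let chiO i x := z ^+ exponent i x.

Let expr_z_eq a b : (z ^+ a == z ^+ b) = (w ^+ a == w ^+ b).
Proof. by rewrite (prim_root_expr_transfer a b w_prim z_prim). Qed.

Let chiO1 i : chiO i 1%g = 1.
Proof. by apply/eqP; rewrite -(expr0 z) expr_z_eq expr0 -chiE lin_char1. Qed.

Let chiOM i x y : chiO i (x * y)%g = chiO i x * chiO i y.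
Proof.
by apply/eqP; rewrite -exprD expr_z_eq exprD -!chiE lin_charM ?inE.
Qed.

Let chiO_eq1 i x : (chiO i x == 1) = ('chi_i x == 1).
Proof. by rewrite -(expr0 z) expr_z_eq expr0 -chiE. Qed.

Let mul_lin_Iirr i0 i := cfIirr ('chi[G]_i0 * 'chi_i).

Let mul_lin_IirrE i0 i : 'chi_(mul_lin_Iirr i0 i) = 'chi_i0 * 'chi_i.
Proof. by rewrite cfIirrE // mul_lin_irr ?mem_irr. Qed.

Let mul_lin_Iirr_inj i0 : injective (mul_lin_Iirr i0).
Proof.
move=> i j /(congr1 (fun k => 'chi_k)); rewrite !mul_lin_IirrE => eq_ij.
apply: irr_inj; apply/cfunP => x; have /cfunP/(_ x) := eq_ij.
by rewrite !cfunE => /mulfI; apply; rewrite (lin_char_neq0 (lin i0)) ?inE.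
Qed.

Let chiO_mul_lin_Iirr i0 i x :
  chiO (mul_lin_Iirr i0 i) x = chiO i0 x * chiO i x.
Proof. by apply/eqP; rewrite -exprD expr_z_eq exprD -!chiE mul_lin_IirrE cfunE. Qed.

Let sum_chiO y : \sum_i chiO i y = if y == 1%g then #|gT|%:R else 0.
Proof.
have [-> | y_neq1] := eqVneq y 1%g.
  by rewrite (eq_bigr (fun=> 1)) // sumr_const card_Iirr_abelian // cardsT.
have [i0 ker_i0] : exists i0, 'chi[G]_i0 y != 1.
  apply/existsP; rewrite -negb_forall; apply: contra y_neq1 => /forallP ker.
  have : y \in \bigcap_i cfker 'chi[G]_i.
    by apply/bigcapP => i _; rewrite cfkerEirr inE lin_char1 ?ker.
  by rewrite TI_cfker_irr inE.
apply: (sumr_twist_eq0 (@mul_lin_Iirr_inj i0) _ (chiO_mul_lin_Iirr i0 ^~ y)).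
by rewrite chiO_eq1.
Qed.

Lemma exists_orthogonal_characters :
  exists (I : finType) (chi : I -> gT -> O), (forall i, group_hom (chi i)) /\
    forall y, \sum_i chi i y = if y == 1%g then #|gT|%:R else 0.
Proof.
exists (Iirr G), chiO; split; last exact: sum_chiO.
by move=> i; split; [apply: chiO1 | apply: chiOM].
Qed.

End CharactersWithValuesInDomain.

Lemma exists_coprime_add_mul (N u m : nat) : (0 < N)%N -> (0 < m)%N ->
  coprime u m -> exists k, coprime N (u + m * k).
Proof.
move=> N_gt0 m_gt0 cop_um.
(* With [k] the part of [N] coprime to [u], each prime factor of [N] divides
   exactly one of [u] and [m * k]. *)
pose pi : nat_pred := [pred q | ~~ (q %| u)%N]; exists (N`_pi)%N.
set k := (N`_pi)%N.
have k_gt0 : (0 < k)%N := part_gt0 _ _.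
rewrite coprime_has_primes ?addn_gt0 ?muln_gt0 ?m_gt0 ?k_gt0 ?orbT //.
apply/hasPn => q; rewrite !mem_primes => /and3P[q_pr _ q_t].
apply/negP => /and3P[_ _ q_N].
have q_k : (q %| k)%N = ~~ (q %| u)%N.
  have := pi_of_part pi N_gt0 q.
  by rewrite !inE /= !mem_primes q_pr N_gt0 k_gt0 q_N.
have [q_u | q'u] := boolP (q %| u)%N.
  move: q_t; rewrite dvdn_addr // Euclid_dvdM // q_k q_u orbF => q_m.
  have : (q %| gcdn u m)%N by rewrite dvdn_gcd q_u q_m.
  by rewrite (eqP cop_um) dvdn1 => /eqP q1; rewrite q1 in q_pr.
by move: q_t; rewrite dvdn_addl ?(negbTE q'u) // dvdn_mull // q_k.
Qed.

Lemma Zp_gcd_mul_unit (N : nat) (u : 'Z_N) : (1 < N)%N ->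
  exists a : {unit 'Z_N}, u = (gcdn u N)%:R * val a.
Proof.
move=> N_gt1; have N_gt0 := ltnW N_gt1.
set d := gcdn u N; have d_gt0 : (0 < d)%N by rewrite gcdn_gt0 N_gt0 orbT.
have u_d : (u %/ d * d)%N = u by rewrite divnK // dvdn_gcdl.
have N_d : (N %/ d * d)%N = N by rewrite divnK // dvdn_gcdr.
have m_gt0 : (0 < N %/ d)%N by rewrite divn_gt0 // dvdn_leq // dvdn_gcdr.
have cop : coprime (u %/ d) (N %/ d).
  by rewrite /coprime -(eqn_pmul2r d_gt0) mul1n muln_gcdl u_d N_d.
have [k cop_Nt] := exists_coprime_add_mul N_gt0 m_gt0 cop.
have dt_eq : (d * (u %/ d + N %/ d * k) = u + k * N)%N.
  by rewrite mulnDr mulnC u_d mulnCA mulnA N_d mulnC.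
exists (FinRing.Unit (etrans (unitZpE _ N_gt1) cop_Nt)).
by rewrite /= -natrM dt_eq natrD natrM pchar_Zp // mulr0 addr0 natr_Zp.
Qed.

Lemma unimod_coprime_gcd N (u v : 'Z_N) : (1 < N)%N -> unimod u v ->
  coprime (gcdn u N) (gcdn v N).
Proof.
move=> N_gt1 [x [y xuyv]]; set d := gcdn (gcdn u N) (gcdn v N).
have d_N : (d %| (Zp_trunc N).+2)%N.
  by rewrite Zp_cast // /d (dvdn_trans (dvdn_gcdl _ _)) ?dvdn_gcdr.
have d_u : (d %| u)%N by rewrite /d (dvdn_trans (dvdn_gcdl _ _)) ?dvdn_gcdl.
have d_v : (d %| v)%N by rewrite /d (dvdn_trans (dvdn_gcdr _ _)) ?dvdn_gcdl.
have dvd_mod n : (d %| n %% (Zp_trunc N).+2)%N = (d %| n)%N.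
  by rewrite /dvdn modn_dvdm.
have : (d %| val (x * u + y * v)%R)%N.
  by rewrite /= dvd_mod dvdn_add ?dvd_mod ?dvdn_mull.
by rewrite xuyv /= modn_small // dvdn1.
Qed.

Lemma unimod_scaled_units N (g h : nat) (a b : {unit 'Z_N}) :
  (1 < N)%N -> (g %| N)%N -> coprime g h ->
  unimod (g%:R * val a) (h%:R * val b).
Proof.
move=> N_gt1 g_N cop_gh.
have g_gt0 : (0 < g)%N by apply: dvdn_gt0 g_N; apply: ltnW.
have [kg kh bezout _] := egcdnP h g_gt0.
have unitV (c : {unit 'Z_N}) : val (c^-1)%g * val c = 1.
  by rewrite -FinRing.val_unitM mulVg.
exists (kg%:R * val (a^-1)%g), (- (kh%:R * val (b^-1)%g)).
rewrite mulNr.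
have -> : kg%:R * val (a^-1)%g * (g%:R * val a)
            - kh%:R * val (b^-1)%g * (h%:R * val b)
          = (kg * g)%:R * (val (a^-1)%g * val a)
            - (kh * h)%:R * (val (b^-1)%g * val b) :> 'Z_N.
  by rewrite !natrM; ring.
by rewrite !unitV !mulr1 bezout (eqP cop_gh) natrD addrAC subrr add0r.
Qed.

Lemma unit_Zp_mulC N (a b : {unit 'Z_N}) : (a * b = b * a)%g.
Proof. by apply: val_inj; rewrite !FinRing.val_unitM mulrC. Qed.

Lemma card_unit_Zp N : (0 < N)%N -> #|{: {unit 'Z_N}}| = totient N.
Proof. by move=> N_gt0; rewrite -cardsT -card_units_Zp. Qed.

Section ThetaProjection.
Variables (N : nat) (O : idomainType) (V : lmodType O).
Variables (sym : 'Z_N -> 'Z_N -> V) (act : {unit 'Z_N} -> V -> V).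
Variable theta : {unit 'Z_N} -> O.
Hypothesis N_gt1 : (1 < N)%N.
Hypothesis act_lin : forall a c x y, act a (c *: x + y) = c *: act a x + act a y.
Hypothesis act_sym : forall a u v, unimod u v ->
  act a (sym u v) = sym (val a * u) (val a * v).
Hypothesis theta_char : is_char theta.
Hypothesis phi_unit : (totient N)%:R \is a @GRing.unit O.

Local Notation psi chi := (fun b => theta b * (chi b)^-1).
Local Notation symF g h := (fun a b : {unit 'Z_N} => sym (g%:R * val a) (h%:R * val b)).

Lemma etheta_lin c x y :
  etheta act theta (c *: x + y) = c *: etheta act theta x + etheta act theta y.
Proof.
rewrite /etheta scalerA mulrC -scalerA -scalerDr; congr (_ *: _).
rewrite scaler_sumr -big_split; apply: eq_bigr => a _.
by rewrite act_lin scalerDr !scalerA mulrC.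
Qed.

Lemma act_symF g h c a b : (g %| N)%N -> coprime g h ->
  act c (symF g h a b) = symF g h (c * a)%g (c * b)%g.
Proof.
move=> g_N cop_gh.
rewrite act_sym; last exact: unimod_scaled_units.
by rewrite !FinRing.val_unitM (mulrCA (val c) g%:R) (mulrCA (val c) h%:R).
Qed.

Lemma act_alpha g h chi c : (g %| N)%N -> coprime g h -> is_char chi ->
  act c (alpha sym g h chi (psi chi)) = theta c *: alpha sym g h chi (psi chi).
Proof.
move=> g_N cop_gh chi_char; rewrite /alpha -!/(twisted_sum _ _ _).
rewrite lin_axiomZ // lin_axiom_twisted_sum //.
rewrite (eq_twisted_sum _ _ (fun a b => act_symF c a b g_N cop_gh)).
have psi_char := group_hom_divr theta_char chi_char.
rewrite (twisted_sum_translate (symF g h) c chi_char psi_char).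
rewrite scalerA [_ * (chi c * _)]mulrC !scalerA mulrCA.
by rewrite divrr ?mulr1 //; apply: group_hom_unit.
Qed.

Lemma etheta_alpha g h chi : (g %| N)%N -> coprime g h -> is_char chi ->
  etheta act theta (alpha sym g h chi (psi chi)) = alpha sym g h chi (psi chi).
Proof.
move=> g_N cop_gh chi_char; rewrite /etheta.
under eq_bigr do rewrite act_alpha // scalerA mulVr ?scale1r ?group_hom_unit //.
by rewrite sumr_const card_unit_Zp ?(ltnW N_gt1) // -scaler_nat scalerA mulVr ?scale1r.
Qed.

Lemma etheta_symF_expansion (I : finType) (chi : I -> {unit 'Z_N} -> O) g h a0 b0 :
  (g %| N)%N -> coprime g h -> (forall i, is_char (chi i)) ->
  (forall y, \sum_i chi i y = if y == 1%g then #|{: {unit 'Z_N}}|%:R else 0) ->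
  etheta act theta (symF g h a0 b0) =
  \sum_i (theta b0 * chi i a0 * chi i b0^-1%g) *: alpha sym g h (chi i) (psi (chi i)).
Proof.
move=> g_N cop_gh chi_char chi_orth.
have := twisted_sum_expansion (symF g h) a0 b0 chi_char theta_char chi_orth.
rewrite /alpha card_unit_Zp ?(ltnW N_gt1) // => expansion.
under [RHS]eq_bigr do rewrite scalerA mulrC -scalerA.
rewrite -scaler_sumr expansion scalerA expr2 invrM // -mulrA mulVr // mulr1.
rewrite /etheta; congr (_ *: _); apply: eq_bigr => c _.
by rewrite act_symF // group_hom_inv // (unit_Zp_mulC c a0) (unit_Zp_mulC c b0).
Qed.

Definition alpha_generator (x : V) : Prop :=
  exists chi g h, [/\ is_char chi, (g %| N)%N, (h %| N)%N, coprime g h &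
                     x = alpha sym g h chi (psi chi)].

Lemma etheta_sym_in_span (z : O) u v : (totient N).-primitive_root z -> unimod u v ->
  in_span alpha_generator (etheta act theta (sym u v)).
Proof.
move=> z_prim uv; rewrite -card_unit_Zp ?(ltnW N_gt1) // in z_prim.
have [I [chi [chi_char chi_orth]]] :=
  exists_orthogonal_characters (units_Zp_abelian N) z_prim.
have [a0 u_eq] := Zp_gcd_mul_unit u N_gt1; have [b0 v_eq] := Zp_gcd_mul_unit v N_gt1.
have cop_uv := unimod_coprime_gcd N_gt1 uv.
rewrite u_eq v_eq (etheta_symF_expansion _ _ (dvdn_gcdr _ _) cop_uv chi_char chi_orth).
apply: in_span_sum => i _; apply: in_span_gen.
exists (chi i), (gcdn u N), (gcdn v N).
by split; rewrite ?dvdn_gcdr //; exact (chi_char i).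
Qed.

End ThetaProjection.

Theorem corollary2p11
  (p M N : nat)
  (Hp : prime p) (Hpodd : odd p) (HM : (0 < M)%N)
  (HpM : ~~ (p %| M * totient M)%N)
  (HN : N = M \/ N = (M * p)%N) (HN1 : (1 < N)%N)
  (O : idomainType)
  (HphiO : (totient N)%:R \is a @GRing.unit O)
  (HmuO : exists z : O, (totient N).-primitive_root z)
  (V : lmodType O)
  (sym : 'Z_N -> 'Z_N -> V)
  (act : {unit 'Z_N} -> V -> V)
  (Hspan : forall x : V, in_span (fun y => exists u v, unimod u v /\ y = sym u v) x)
  (Hneg : forall u v, unimod u v -> sym u v = sym (- u) (- v))
  (Hrot : forall u v, unimod u v -> sym u v = - sym (- v) u)
  (Hman : forall u v, unimod u v -> sym u v = sym u (u + v) + sym (u + v) v)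
  (Hlin : forall (a : {unit 'Z_N}) (c : O) (x y : V),
            act a (c *: x + y) = c *: act a x + act a y)
  (Hact : forall (a : {unit 'Z_N}) u v, unimod u v ->
            act a (sym u v) = sym (val a * u) (val a * v))
  (theta : {unit 'Z_N} -> O)
  (Htheta : is_char theta)
  (Htheta_even : forall a : {unit 'Z_N}, val a = -1 -> theta a = 1) :
  forall x : V,
    (exists y : V, x = etheta act theta y) <->
    in_span (fun z => exists (chi : {unit 'Z_N} -> O) (g h : nat),
               [/\ is_char chi, (g %| N)%N, (h %| N)%N, coprime g h &
                   z = alpha sym g h chi (fun b => theta b * (chi b)^-1)]) x.
Proof.
(* Only the invertibility of phi(N) and the root of unity in O are needed. *)
have [z z_prim] := HmuO.
have etheta_linear := etheta_lin theta Hlin.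
move=> x; split.
- case=> y ->; have [s [s_sym ->]] := Hspan y.
  rewrite (lin_axiom_comb etheta_linear).
  apply: in_span_sum => q /s_sym [u [v [uv ->]]].
  exact (etheta_sym_in_span HN1 Hact Htheta HphiO z_prim uv).
- case=> s [s_alpha ->]; exists (\sum_(q <- s) q.1 *: q.2).
  rewrite (lin_axiom_comb etheta_linear); apply: eq_big_seq => q.
  case/s_alpha => chi [g [h [chi_char g_N _ cop_gh ->]]].
  by rewrite (etheta_alpha HN1 Hlin Hact Htheta HphiO g_N cop_gh chi_char).
Qed.
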